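(* Let $d\ge1$ and let $P$ be a permutation array of rank $2$ and dimension $d$. Let $\Gamma$ be the star metric graph with central vertex $v$ and edges $e_1,\dots,e_d$ of common length $\ell>0$. For $\mathbf x\in[2]^d$, let $f_{\mathbf x}$ be the function on $\Gamma$ with $f_{\mathbf x}(v)=0$ and constant slope $x_i$ along $e_i$ directed away from $v$. Let $s$ be an integer with $s\ge\sum_ix_i$ for all $\mathbf x\in P$, and let $\Sigma=\langle f_{\mathbf x}:\mathbf x\in P\rangle\subseteq R(s\cdot v)$. Then for every effective divisor $E=v_1+v_2$ of degree $2$ on $\Gamma$ there exists $f\in\Sigma$ with $\mathrm{div}(f)+s\cdot v\ge E$.
   Context: $\mathrm{sl}_\eta(f)$ denotes the outgoing slope. We set $\mathrm{div}(f)=\sum_p(-\sum_{\eta\in T_p}\mathrm{sl}_\eta(f))p$ and $R(D)=\{f:D+\mathrm{div}(f)\ge0\}$. $\langle f_1,\dots,f_n\rangle$ denotes the set of all $\min\{f_1+a_1,\dots,f_n+a_n\}$ with $a_i\in\mathbb R$. $[2]=\{0,1,2\}$, and $[2]^d$ is ordered coordinatewise with meet the coordinatewise minimum. $P\subseteq[r]^d$ is rankable of rank $t$ if each coordinate takes exactly $t+1$ distinct values on $P$. It is totally rankable if each principal subarray $\{\mathbf y\in P:\mathbf y\succeq\mathbf x\}$ is rankable. A redundant point is the coordinatewise minimum of $\ge2$ elements of $P$, each sharing a coordinate with it. A permutation array of rank $r$ and dimension $d$ is a totally rankable $P\subseteq[r]^d$ of rank $r$ with no redundant points. *)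

From HB Require Import structures.
From mathcomp Require Import all_boot all_order all_algebra.
From mathcomp Require Import reals.
Set Implicit Arguments. Unset Strict Implicit. Unset Printing Implicit Defensive.
Import Order.TTheory GRing.Theory Num.Theory.
Local Open Scope ring_scope.

(* A point of [r]^d = {0,...,r}^d. *)
Notation pt r d := {ffun 'I_d -> 'I_r.+1}.

Definition cle r d (x y : pt r d) : bool := [forall i, (x i <= y i)%N].

Definition ncoordvals r d (Q : {set pt r d}) (i : 'I_d) : nat :=
  #|[set x i | x : pt r d in Q]|.

Definition rankable_of_rank r d (Q : {set pt r d}) (t : nat) : Prop :=
  forall i, ncoordvals Q i = t.+1.

(* rankable (of some rank; the empty array counts as rankable, of rank -1) *)
Definition rankable r d (Q : {set pt r d}) : Prop :=
  exists n : nat, forall i, ncoordvals Q i = n.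

Definition principal r d (P : {set pt r d}) (x : pt r d) : {set pt r d} :=
  [set y in P | cle x y].

Definition totally_rankable r d (P : {set pt r d}) : Prop :=
  forall x : pt r d, rankable (principal P x).

Definition is_meet r d (S : {set pt r d}) (y : pt r d) : Prop :=
  forall i, (forall z, z \in S -> (y i <= z i)%N) /\ (exists2 z, z \in S & z i = y i).

Definition shares_coord r d (z y : pt r d) : Prop := exists i, z i = y i.

Definition redundant r d (P : {set pt r d}) (y : pt r d) : Prop :=
  exists S : {set pt r d},
    [/\ S \subset P :\ y, (2 <= #|S|)%N, is_meet S y &
        forall z, z \in S -> shares_coord z y].

Definition permutation_array (r d : nat) (P : {set pt r d}) : Prop :=
  [/\ totally_rankable P, rankable_of_rank P r &
      forall y, y \in P -> ~ redundant P y].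

(* A point of the star graph Gamma with edges e_0..e_{d-1} of length l:
   [None] is the central vertex v, [Some (i, t)] (with 0 < t <= l) is the point
   of e_i at distance t from v. *)
Definition spt (R : realType) (d : nat) := option ('I_d * R).

Definition valid_pt (R : realType) d (l : R) (p : spt R d) : bool :=
  if p is Some (_, t) then (0 < t) && (t <= l) else true.

(* Tangent directions: (i, true) = along e_i away from v; (i, false) = along e_i
   towards v.  [tangent l p eta] says eta is a tangent direction at p. *)
Definition tangent (R : realType) d (l : R) (p : spt R d) (eta : 'I_d * bool) : bool :=
  match p with
  | None => eta.2
  | Some (i, t) => (eta.1 == i) && (if eta.2 then t < l else true)
  end.

Definition move (R : realType) d (p : spt R d) (eta : 'I_d * bool) (h : R) : spt R d :=
  match p with
  | None => Some (eta.1, h)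
  | Some (i, t) => if eta.2 then Some (i, t + h)
                   else if h < t then Some (i, t - h) else None
  end.

Definition has_slope (R : realType) d (f : spt R d -> R) (p : spt R d)
    (eta : 'I_d * bool) (sigma : R) : Prop :=
  exists2 delta : R, 0 < delta &
    forall h, 0 < h -> h < delta -> f (move p eta h) = f p + sigma * h.

(* div(f) + D >= E, for divisors D, E given by their coefficient functions:
   at every point p, -(sum of outgoing slopes) + D(p) >= E(p). *)
Definition div_plus_ge (R : realType) d (l : R) (f : spt R d -> R)
    (D E : spt R d -> R) : Prop :=
  forall p, valid_pt l p ->
    exists sl : 'I_d * bool -> R,
      (forall eta, tangent l p eta -> has_slope f p eta (sl eta)) /\
      E p <= - (\sum_(eta | tangent l p eta) sl eta) + D p.

Definition sv (R : realType) d (s : int) (p : spt R d) : R :=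
  if p is None then s%:~R else 0.

Definition div2 (R : realType) d (v1 v2 : spt R d) (p : spt R d) : R :=
  (p == v1)%:R + (p == v2)%:R.

Definition fx (R : realType) d (x : pt 2 d) (p : spt R d) : R :=
  if p is Some (i, t) then (x i)%:R * t else 0.

(* f belongs to Sigma = < f_x : x in P >, i.e. f = min_{x in P} (f_x + a_x)
   on Gamma for some real constants a_x *)
Definition in_Sigma (R : realType) d (l : R) (P : {set pt 2 d}) (f : spt R d -> R) : Prop :=
  exists a : pt 2 d -> R, forall p, valid_pt l p ->
    (forall x, x \in P -> f p <= fx x p + a x) /\
    (exists2 x, x \in P & f p = fx x p + a x).

From HB Require Import structures.
From mathcomp Require Import all_boot all_order all_algebra.
From mathcomp Require Import reals.
From mathcomp Require Import lra.
Import Order.TTheory GRing.Theory Num.Theory.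
Set Implicit Arguments. Unset Strict Implicit. Unset Printing Implicit Defensive.
Local Open Scope ring_scope.

(* Every f in Sigma is a lower envelope min_x (f_x + a_x).  Its outgoing slope
   in a direction is the least slope of the f_x active (attaining the minimum)
   at the point, so the coefficient of div(f) + s.v is at least
   s - sum_k y_k(k) at v, and at least z_i - y_i at a point of e_i, for any
   active y, z.  It therefore suffices to make enough of P active at v1 and v2.
   With h x = f_x(v1) - f_x(v2) and a_x = - min (f_x(v1), f_x(v2) + c), the
   points active at v1 are those with h x <= c and those active at v2 those
   with h x >= c.  Some threshold c leaves, on each side, two points that
   differ in the coordinate of the edge carrying v1 (resp. v2): otherwise P
   would be covered by two hyperplanes {x_i = a} and {x_j = b}, which the
   principal subarrays of a rank-2 permutation array forbid.  If v1 = v2,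
   c = 0 makes all of P active at v1. *)

Section PrincipalSubarrays.

Variables (r d : nat) (P : {set pt r d}).

Lemma coord_surj : rankable_of_rank P r ->
  forall k (b : 'I_r.+1), exists2 x, x \in P & x k = b.
Proof.
move=> rk k b.
have im_full : [set x k | x : pt r d in P] = setT.
  apply/eqP; rewrite eqEcard subsetT cardsT card_ord /=.
  exact: eq_leq (esym (rk k)).
have : b \in [set x k | x : pt r d in P] by rewrite im_full inE.
by case/imsetP => x xP ->; exists x.
Qed.

Definition axis_pt (i : 'I_d) (b : 'I_r.+1) : pt r d :=
  [ffun k => if k == i then b else ord0].

Lemma cle_axis_pt i b y : cle (axis_pt i b) y = (b <= y i)%N.
Proof.
apply/forallP/idP => [/(_ i) | le_b k]; first by rewrite ffunE eqxx.
by rewrite ffunE; case: eqP => [->|].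
Qed.

Lemma in_principal_axis i b z :
  (z \in principal P (axis_pt i b)) = (z \in P) && (b <= z i)%N.
Proof. by rewrite inE cle_axis_pt. Qed.

Lemma ncoordvals_principal_axis : totally_rankable P -> rankable_of_rank P r ->
  forall i j b, ncoordvals (principal P (axis_pt i b)) j = (r.+1 - b)%N.
Proof.
move=> tr rk i j b; have [n eq_n] := tr (axis_pt i b).
rewrite eq_n -(eq_n i) /ncoordvals.
have -> : [set x i | x : pt r d in principal P (axis_pt i b)]
          = [set c : 'I_r.+1 | (b <= c)%N].
  apply/setP => c; rewrite inE; apply/imsetP/idP => [[x]|le_bc].
    by rewrite in_principal_axis => /andP[_ ?] ->.
  have [x xP xc] := coord_surj rk i c.
  by exists x; rewrite ?in_principal_axis ?xP xc.
rewrite cardsE -sum1_card (eq_bigl (fun c : 'I_r.+1 => true && (b <= c)%N)) //.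
by rewrite -(big_geq_mkord _ _ xpredT (fun=> 1%N)) sum_nat_const_nat muln1.
Qed.

End PrincipalSubarrays.

Lemma exists_const_in (I : finType) (T : Type) (S : {set I}) (f : I -> T) (t0 : T) :
  {in S &, forall x y, f x = f y} -> exists t, {in S, forall x, f x = t}.
Proof.
move=> eq_f; have [->|[x xS]] := set_0Vmem S; first by exists t0 => ?; rewrite inE.
by exists (f x) => y yS; apply: eq_f.
Qed.

Lemma ord3_two_others (b : 'I_3) :
  exists b1 b2 : 'I_3, [/\ b1 != b2, b1 != b & b2 != b].
Proof.
by case: b => [[|[|[|//]]] ?]; [exists (inord 1), (inord 2)|
  exists (inord 0), (inord 2)|exists (inord 0), (inord 1)];
  rewrite /eq_op /= !inordK.
Qed.

Section RankTwo.

Variables (d : nat) (P : {set pt 2 d}).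
Hypotheses (trP : totally_rankable P) (rkP : rankable_of_rank P 2).

Lemma top_coord_agree i j x y : x \in P -> y \in P ->
  (2 <= x i)%N -> (2 <= y i)%N -> x j = y j.
Proof.
move=> xP yP xi yi; set Q := principal P (axis_pt i (inord 2)).
have /card_le1_eqP : (ncoordvals Q j <= 1)%N.
  by rewrite ncoordvals_principal_axis // inordK.
by apply; apply: imset_f; rewrite in_principal_axis inordK ?xP ?yP.
Qed.

Lemma mid_coord_two_values i j :
  exists x y, [/\ x \in P, y \in P, (1 <= x i)%N, (1 <= y i)%N & x j != y j].
Proof.
have : (1 < ncoordvals (principal P (axis_pt i (inord 1))) j)%N.
  by rewrite ncoordvals_principal_axis // inordK.
case/card_gt1P => _ [_ [/imsetP[x + ->] /imsetP[y + ->] xy]].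
rewrite !in_principal_axis inordK // => /andP[xP xi] /andP[yP yi].
by exists x, y.
Qed.

Lemma mid_coord_no_three_values i j x y z :
  x \in P -> y \in P -> z \in P -> (1 <= x i)%N -> (1 <= y i)%N -> (1 <= z i)%N ->
  x j != y j -> y j != z j -> z j != x j -> False.
Proof.
move=> xP yP zP xi yi zi xy yz zx; set Q := principal P (axis_pt i (inord 1)).
have inQ w : w \in P -> (1 <= w i)%N -> w j \in [set v j | v : pt 2 d in Q].
  by move=> wP wi; apply: imset_f; rewrite in_principal_axis inordK ?wP.
have : (2 < ncoordvals Q j)%N.
  by apply/card_gt2P; exists (x j), (y j), (z j); split; split; rewrite ?inQ.
by rewrite ncoordvals_principal_axis // inordK.
Qed.

Lemma no_cross_cover (i j : 'I_d) (a b : 'I_3) :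
  ~ {in P, forall x : pt 2 d, x i = a \/ x j = b}.
Proof.
move=> cover.
have on_b z : z \in P -> z i != a -> z j = b.
  by move=> zP; case: (cover z zP) => // ->; rewrite eqxx.
have [b1 [b2 [b12 b1b b2b]]] := ord3_two_others b.
have [u uP uj] := coord_surj rkP j b1.
have [w wP wj] := coord_surj rkP j b2.
have ui : u i = a by case: (cover u uP) => // ub; move: b1b; rewrite -uj ub eqxx.
have wi : w i = a by case: (cover w wP) => // wb; move: b2b; rewrite -wj wb eqxx.
case: a cover ui wi on_b => [[|[|[|//]]] lt_a] _ ui wi on_b.
- have [x [y [xP yP xi yi]]] := mid_coord_two_values i j.
  by rewrite !on_b ?eqxx // -val_eqE /= -lt0n.
- have [e eP ei] := coord_surj rkP i ord_max.
  have ej : e j = b by rewrite on_b // ei.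
  apply: (mid_coord_no_three_values (i := i) (j := j) uP wP eP);
    by rewrite ?ui ?wi ?ei ?uj ?wj ?ej // eq_sym.
- by move: b12; rewrite -uj -wj (top_coord_agree (i := i) j uP wP) ?ui ?wi ?eqxx.
Qed.

Lemma threshold_split (R : realDomainType) (i j : 'I_d) (h : pt 2 d -> R) :
  exists c : R,
    (exists x y, [/\ x \in P, y \in P, (x i < y i)%N, h x <= c & h y <= c]) /\
    (exists z w, [/\ z \in P, w \in P, (z j < w j)%N, c <= h z & c <= h w]).
Proof.
(* c is the least max (h x) (h y) over pairs x, y differing in coordinate i. *)
pose split_i (q : pt 2 d * pt 2 d) := [&& q.1 \in P, q.2 \in P & q.1 i != q.2 i].
have [x0 x0P x0i] := coord_surj rkP i ord0.
have [x2 x2P x2i] := coord_surj rkP i ord_max.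
have split_x : split_i (x0, x2) by rewrite /split_i /= x0P x2P x0i x2i.
case: (arg_minP (fun q => Num.max (h q.1) (h q.2)) split_x).
move=> [q1 q2] /and3P[/= q1P q2P q12] q_min; set c := Num.max (h q1) (h q2).
exists c; split.
  have le_c1 : h q1 <= c by rewrite le_max lexx.
  have le_c2 : h q2 <= c by rewrite le_max lexx orbT.
  case: (ltngtP (q1 i) (q2 i)) => [lt12|lt21|/val_inj eq12]; first by exists q1, q2.
    by exists q2, q1.
  by rewrite eq12 eqxx in q12.
case: (boolP [exists z, exists w,
    [&& z \in P, w \in P, (z j < w j)%N, c <= h z & c <= h w]]).
  by case/existsP=> z /existsP[w /and5P[]]; exists z, w.
rewrite negb_exists => /forallP no_up; exfalso.
have low_i : {in [set x in P | h x < c] &, forall x y : pt 2 d, x i = y i}.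
  move=> x y; rewrite !inE => /andP[xP xc] /andP[yP yc]; apply/eqP; apply: contraT => xy.
  have := q_min (x, y); rewrite /split_i /= xP yP xy => /(_ isT).
  by rewrite leNgt gt_max xc yc.
have up_j : {in [set z in P | c <= h z] &, forall z w : pt 2 d, z j = w j}.
  move=> z w; rewrite !inE => /andP[zP cz] /andP[wP cw].
  case: (ltngtP (z j) (w j)) => [zw|wz|/val_inj //].
    by have := no_up z; rewrite negb_exists => /forallP/(_ w); rewrite zP wP zw cz cw.
  by have := no_up w; rewrite negb_exists => /forallP/(_ z); rewrite zP wP wz cz cw.
have [a low_a] := exists_const_in ord0 low_i.
have [b up_b] := exists_const_in ord0 up_j.
apply: (@no_cross_cover i j a b) => x xP.
by case: (ltP (h x) c) => hx; [left; apply: low_a|right; apply: up_b]; rewrite inE xP.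
Qed.

End RankTwo.

Lemma argmin_affine_near (R : realFieldType) (I : finType) (S : {set I})
    (b m : I -> R) (y : I) :
  y \in S -> {in S, forall x, b y <= b x} -> {in S, forall x, b x = b y -> m y <= m x} ->
  exists2 delta : R, 0 < delta & forall h, 0 < h -> h < delta ->
    {in S, forall x, b y + m y * h <= b x + m x * h}.
Proof.
move=> yS b_min m_min.
exists (\big[Num.min/1]_(x in S | b y < b x) ((b x - b y) / (`|m y - m x| + 1))).
  apply/bigmin_gtP; split=> // x /andP[_ yx].
  by rewrite divr_gt0 ?subr_gt0 // ltr_wpDl.
move=> h h0 h_delta x xS; have := b_min x xS; rewrite le_eqVlt => /orP[/eqP bxy|yx].
  by rewrite bxy lerD2l ler_pM2r // m_min.
have : h < (b x - b y) / (`|m y - m x| + 1).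
  by apply: lt_le_trans h_delta _; apply: bigmin_le_cond; rewrite xS.
have pos : 0 < `|m y - m x| + 1 by rewrite ltr_wpDl.
rewrite ltr_pdivlMr // => h_gap.
have := ler_wpM2r (ltW h0) (ler_norm (m y - m x)); nra.
Qed.

Section StarGraph.

Variables (R : realType) (d : nat) (l : R).

Definition fx_slope (x : pt 2 d) (p : spt R d) (eta : 'I_d * bool) : R :=
  match p with
  | None => (x eta.1)%:R
  | Some (i, _) => if eta.2 then (x i)%:R else - (x i)%:R
  end.

Lemma fx_move x p eta h : tangent l p eta -> 0 < h ->
  (if p is Some (_, t) then h < t else true) ->
  fx x (move p eta h) = fx x p + fx_slope x p eta * h.
Proof.
case: p => [[i t]|] /= _ h0 ht; last by rewrite add0r.
by case: eta.2; last rewrite ht; rewrite /fx /=; lra.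
Qed.

Lemma sum_tangent_vertex (F : 'I_d * bool -> R) :
  \sum_(eta | tangent l None eta) F eta = \sum_k F (k, true).
Proof.
rewrite (eq_bigr (fun eta => F (eta.1, eta.2))); last by case.
rewrite (eq_bigl (fun eta : 'I_d * bool => xpredT eta.1 && id eta.2)) //.
rewrite -(pair_big xpredT id (fun k b => F (k, b))) /=.
by apply: eq_bigr => k _; rewrite big_mkcond big_bool /= addr0.
Qed.

Lemma sum_tangent_edge i t (F : 'I_d * bool -> R) :
  \sum_(eta | tangent l (Some (i, t)) eta) F eta =
  (if t < l then F (i, true) else 0) + F (i, false).
Proof.
rewrite (eq_bigr (fun eta => F (eta.1, eta.2))); last by case.
rewrite (eq_bigl (fun eta : 'I_d * bool =>
  pred1 i eta.1 && (fun b : bool => if b then t < l else true) eta.2)) //.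
rewrite -(pair_big (pred1 i) (fun b : bool => if b then t < l else true)
  (fun k b => F (k, b))) /=.
by rewrite big_pred1_eq big_mkcond big_bool /=; case: (t < l).
Qed.

Definition edge_of (p : spt R d) (k : 'I_d) : 'I_d := if p is Some (i, _) then i else k.

Section Envelope.

Variables (P : {set pt 2 d}) (x0 : pt 2 d) (a : pt 2 d -> R).
Hypothesis x0P : x0 \in P.

Definition fx_shift x p := fx x p + a x.

Definition env_arg p := [arg min_(x < x0 | x \in P) fx_shift x p]%O.

Definition env p := fx_shift (env_arg p) p.

Definition active p := [set x in P | fx_shift x p == env p].

Definition env_slope_arg p eta := [arg min_(x < env_arg p in active p) fx_slope x p eta]%O.

Definition env_slope p eta := fx_slope (env_slope_arg p eta) p eta.

Lemma env_arg_in p : env_arg p \in P.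
Proof. by rewrite /env_arg; case: arg_minP. Qed.

Lemma env_le p x : x \in P -> env p <= fx_shift x p.
Proof. by rewrite /env /env_arg; case: arg_minP => // y _; apply. Qed.

Lemma env_arg_active p : env_arg p \in active p.
Proof. by rewrite inE env_arg_in /=. Qed.

Lemma active_of_le p x : x \in P -> {in P, forall y, fx_shift x p <= fx_shift y p} ->
  x \in active p.
Proof.
move=> xP x_min; rewrite inE xP eq_le env_le //= andbT.
exact: x_min (env_arg_in p).
Qed.

Lemma env_slope_arg_active p eta : env_slope_arg p eta \in active p.
Proof. by rewrite /env_slope_arg; case: arg_minP => //; apply: env_arg_active. Qed.

Lemma env_slope_le p eta x : x \in active p -> env_slope p eta <= fx_slope x p eta.
Proof.
rewrite /env_slope /env_slope_arg; case: arg_minP; first exact: env_arg_active.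
by move=> y _; apply.
Qed.

Lemma env_in_Sigma : in_Sigma l P env.
Proof.
exists a => p _; split; first by move=> x; apply: env_le.
by exists (env_arg p); first exact: env_arg_in.
Qed.

Lemma env_has_slope p eta : valid_pt l p -> tangent l p eta ->
  has_slope env p eta (env_slope p eta).
Proof.
move=> vp tp; set y := env_slope_arg p eta.
have /[dup] yA : y \in active p := env_slope_arg_active p eta.
rewrite inE => /andP[yP /eqP y_env].
have [delta delta0 y_near] : exists2 delta : R, 0 < delta & forall h, 0 < h -> h < delta ->
    {in P, forall x, fx_shift y p + fx_slope y p eta * h
                     <= fx_shift x p + fx_slope x p eta * h}.
  apply: argmin_affine_near; first exact: yP.
    by move=> x xP /=; rewrite y_env env_le.
  move=> x xP /= bx; have := @env_slope_le p eta x; rewrite /env_slope -/y.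
  by apply; rewrite inE xP bx y_env eqxx.
exists (Num.min delta (if p is Some (_, t) then t else delta)).
  by rewrite lt_min delta0; case: (p) vp => [[i t]|] //= /andP[].
move=> h h0; rewrite lt_min => /andP[h_delta h_t].
have near_p x : fx_shift x (move p eta h) = fx_shift x p + fx_slope x p eta * h.
  by rewrite /fx_shift fx_move //; [lra | case: (p) h_t => [[]|]].
have env_move : env (move p eta h) = fx_shift y (move p eta h).
  apply/eqP; rewrite eq_le env_le //= /env !near_p.
  exact: y_near (env_arg_in _).
by rewrite env_move near_p y_env.
Qed.

Variable s : int.

Definition env_div_coef p := - (\sum_(eta | tangent l p eta) env_slope p eta) + sv s p.

Lemma div_plus_ge_env E : (forall p, valid_pt l p -> E p <= env_div_coef p) ->
  div_plus_ge l env (sv s) E.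
Proof.
move=> E_le p vp; exists (env_slope p); split; last exact: E_le.
by move=> eta; apply: env_has_slope.
Qed.

Lemma env_div_coef_vertex (c : 'I_d -> pt 2 d) : (forall k, c k \in active None) ->
  s%:~R - (\sum_k (c k k : nat))%:R <= env_div_coef None.
Proof.
move=> cA; rewrite /env_div_coef sum_tangent_vertex /= natr_sum.
have : \sum_k env_slope None (k, true) <= \sum_k ((c k k : nat)%:R : R).
  by apply: ler_sum => k _; apply: env_slope_le.
lra.
Qed.

Lemma env_div_coef_edge i t y z :
  y \in active (Some (i, t)) -> z \in active (Some (i, t)) ->
  (z i)%:R - (y i)%:R <= env_div_coef (Some (i, t)).
Proof.
move=> yA zA; rewrite /env_div_coef sum_tangent_edge /=.
have := env_slope_le (i, true) yA; have := env_slope_le (i, false) zA; rewrite /=.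
by have : (0 : R) <= (y i)%:R by []; case: (t < l); lra.
Qed.

Lemma env_div_coef_ge2 p : 2 <= s -> (forall k b, exists2 y, y \in active p & y k = b) ->
  2 <= env_div_coef p.
Proof.
case: p => [[i t]|] s2 all_active.
  have [y yA yi] := all_active i ord0; have [z zA zi] := all_active i ord_max.
  by apply: le_trans (env_div_coef_edge yA zA); rewrite yi zi /=; lra.
have zero_active k : exists y, (y \in active None) && (y k == ord0).
  by have [y yA yk] := all_active k ord0; exists y; rewrite yA yk.
apply: le_trans (env_div_coef_vertex (c := fun k => xchoose (zero_active k)) _); last first.
  by move=> k; case/andP: (xchooseP (zero_active k)).
rewrite big1 => [|k _]; last by case/andP: (xchooseP (zero_active k)) => _ /eqP ->.
by rewrite subr0 -[2]/(2%:~R) ler_int.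
Qed.

Hypothesis s_bound : forall x, x \in P -> ((\sum_(i < d) (x i : nat))%:Z <= s)%R.

Lemma sum_coord_le x : x \in P -> ((\sum_i (x i : nat))%:R : R) <= s%:~R.
Proof. by move=> xP; rewrite pmulrn ler_int s_bound. Qed.

Lemma env_div_coef_ge0 p : 0 <= env_div_coef p.
Proof.
case: p => [[i t]|].
  apply: le_trans (env_div_coef_edge (env_arg_active _) (env_arg_active _)).
  by rewrite subrr.
apply: le_trans (env_div_coef_vertex (c := fun=> env_arg None) _) => // [|k].
  by rewrite subr_ge0 sum_coord_le ?env_arg_in.
exact: env_arg_active.
Qed.

Lemma env_div_coef_ge1 p k y z : y \in active p -> z \in active p ->
  (y (edge_of p k) < z (edge_of p k))%N -> 1 <= env_div_coef p.
Proof.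
case: p => [[i t]|] /= yA zA; rewrite -(ler_nat R) -addn1 natrD => yz.
  by apply: le_trans (env_div_coef_edge yA zA); lra.
have zP : z \in P by move: zA; rewrite inE => /andP[].
apply: le_trans (env_div_coef_vertex (c := fun m => if m == k then y else z) _); last first.
  by move=> m; case: (m == k).
have := sum_coord_le zP; rewrite (bigD1 k) //= [X in _ - X%:R](bigD1 k) //= eqxx.
rewrite [X in _ - (_ + X)%:R](eq_bigr (fun m => (z m : nat))) => [|m /negbTE -> //].
by rewrite !natrD; lra.
Qed.

End Envelope.

Definition split_shift (v1 v2 : spt R d) (c : R) (x : pt 2 d) : R :=
  - Num.min (fx x v1) (fx x v2 + c).

Section SplitShift.

Variables (P : {set pt 2 d}) (x0 : pt 2 d) (v1 v2 : spt R d) (c : R).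
Hypothesis x0P : x0 \in P.

Lemma active_split_left x : x \in P -> fx x v1 - fx x v2 <= c ->
  x \in active P x0 (split_shift v1 v2 c) v1.
Proof.
move=> xP hx; apply: active_of_le => // y _.
rewrite /fx_shift /split_shift min_l; last by lra.
have : Num.min (fx y v1) (fx y v2 + c) <= fx y v1 by rewrite ge_min lexx.
lra.
Qed.

Lemma active_split_right x : x \in P -> c <= fx x v1 - fx x v2 ->
  x \in active P x0 (split_shift v1 v2 c) v2.
Proof.
move=> xP hx; apply: active_of_le => // y _.
rewrite /fx_shift /split_shift min_r; last by lra.
have : Num.min (fx y v1) (fx y v2 + c) <= fx y v2 + c by rewrite ge_min lexx orbT.
lra.
Qed.

End SplitShift.

End StarGraph.

Section TwoPointDivisors.

Variables (R : realType) (d : nat) (l : R) (P : {set pt 2 d}) (s : int).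
Hypotheses (trP : totally_rankable P) (rkP : rankable_of_rank P 2).
Hypothesis s_bound : forall x, x \in P -> ((\sum_(i < d) (x i : nat))%:Z <= s)%R.
Variable x0 : pt 2 d.
Hypotheses (x0P : x0 \in P) (s2 : 2 <= s).

Lemma Sigma_div_double (v : spt R d) :
  exists f, in_Sigma l P f /\ div_plus_ge l f (sv s) (div2 v v).
Proof.
exists (env P x0 (split_shift v v 0)); split; first exact: env_in_Sigma.
apply: div_plus_ge_env => // p vp; rewrite /div2.
have [->|_] := eqVneq p v; last by rewrite mulr0n addr0; apply: env_div_coef_ge0.
rewrite mulr1n; apply: env_div_coef_ge2 => // k b.
have [x xP xk] := coord_surj rkP k b; exists x => //.
by apply: active_split_left; rewrite ?subrr.
Qed.

Lemma Sigma_div_distinct (v1 v2 : spt R d) (k : 'I_d) : v1 != v2 ->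
  exists f, in_Sigma l P f /\ div_plus_ge l f (sv s) (div2 v1 v2).
Proof.
move=> v12; have [c [[x [y [xP yP xy hx hy]]] [z [w [zP wP zw hz hw]]]]] :=
  threshold_split trP rkP (edge_of v1 k) (edge_of v2 k) (fun x => fx x v1 - fx x v2).
exists (env P x0 (split_shift v1 v2 c)); split; first exact: env_in_Sigma.
apply: div_plus_ge_env => // p vp; rewrite /div2.
have [->|p1] := eqVneq p v1.
  rewrite (negbTE v12) mulr1n mulr0n addr0.
  by apply: (env_div_coef_ge1 l x0P s_bound _ _ xy); apply: active_split_left.
have [->|p2] := eqVneq p v2.
  rewrite mulr1n mulr0n add0r.
  by apply: (env_div_coef_ge1 l x0P s_bound _ _ zw); apply: active_split_right.
by rewrite !mulr0n addr0; apply: env_div_coef_ge0.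
Qed.

End TwoPointDivisors.

Theorem mainTheorem18 (R : realType) (d : nat) (P : {set pt 2 d}) (l : R) (s : int)
  (hd : (1 <= d)%N) (hP : permutation_array P) (hl : 0 < l)
  (hs : forall x, x \in P -> ((\sum_(i < d) (x i : nat))%:Z <= s)%R)
  (v1 v2 : spt R d) (hv1 : valid_pt l v1) (hv2 : valid_pt l v2) :
  exists f : spt R d -> R,
    in_Sigma l P f /\ div_plus_ge l f (sv s) (div2 v1 v2).
Proof.
case: hP => trP rkP _; pose k : 'I_d := Ordinal hd.
have [e eP e_top] := coord_surj rkP k ord_max.
have s2 : 2 <= s.
  by apply: le_trans (hs e eP); rewrite (bigD1 k) //= e_top lez_nat leq_addr.
have [<-|v12] := eqVneq v1 v2; first exact (Sigma_div_double l rkP hs eP s2 v1).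
exact (Sigma_div_distinct l trP rkP hs eP k v12).
Qed.
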